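(* Let $\mathbf d\in\mathbb Z^n$ with $m=d_1+\dots+d_n$ and $\gcd(m,n)=1$. Then $y^{\mathbf d}s_1\cdots s_{n-1}$ is conjugate in $\widetilde{S_n}$ to $\pi^m$, and $\pi^m$ is an element of minimal length in this conjugacy class.
   Context: $\widetilde{S_n}$ is identified with the group of bijections $v:\mathbb Z\to\mathbb Z$ with $v(m+n)=v(m)+n$; $s_i$ ($i\in\mathbb Z/n$) swaps $i$ and $i+1$ (periodically extended), $\pi(m)=m+1$, $y_i(m)=m+n$ if $m\equiv i\bmod n$ and $y_i(m)=m$ otherwise ($1\le i\le n$); $y^{\mathbf d}=y_1^{d_1}\cdots y_n^{d_n}$. $\widehat{S_n}$ is the Coxeter group generated by $s_0,\dots,s_{n-1}$; every $v\in\widetilde{S_n}$ is uniquely $\pi^k\alpha$ with $\alpha\in\widehat{S_n}$, and the length is $\ell(v):=\ell(\alpha)$ (Coxeter length), so $\ell(\pi^k)=0$. *)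

From Stdlib Require Import ZArith List Lia.
Open Scope Z_scope.

(* An element of the extended affine symmetric group: a bijection v : Z -> Z
   with v (x + n) = v x + n. *)
Definition is_affperm (n : nat) (v : Z -> Z) : Prop :=
  (exists h : Z -> Z, (forall x, h (v x) = x) /\ (forall x, v (h x) = x)) /\
  (forall x, v (x + Z.of_nat n) = v x + Z.of_nat n).

(* Product in the group = composition; u * v = u o v. Equality is pointwise. *)
Definition feq (u v : Z -> Z) : Prop := forall x, u x = v x.

Definition aff_conj (n : nat) (u v : Z -> Z) : Prop :=
  exists g : Z -> Z, is_affperm n g /\ forall x, g (u x) = v (g x).

(* s_i (i in Z/n) swaps i and i+1, periodically extended.  For n = 1 there is
   no such transposition and the Coxeter group is trivial: s_i = id. *)
Definition s (n : nat) (i : Z) (x : Z) : Z :=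
  let N := Z.of_nat n in
  if (2 <=? N) then
    if (x mod N =? i mod N) then x + 1
    else if (x mod N =? (i + 1) mod N) then x - 1
    else x
  else x.

Definition pi (x : Z) : Z := x + 1.
Definition pi_pow (k : Z) (x : Z) : Z := x + k.

Definition y (n : nat) (i : Z) (x : Z) : Z :=
  if (x mod Z.of_nat n =? i mod Z.of_nat n) then x + Z.of_nat n else x.
Definition y_inv (n : nat) (i : Z) (x : Z) : Z :=
  if (x mod Z.of_nat n =? i mod Z.of_nat n) then x - Z.of_nat n else x.

Definition y_pow (n : nat) (i : Z) (k : Z) : Z -> Z :=
  if (0 <=? k) then Nat.iter (Z.to_nat k) (fun f x => y n i (f x)) (fun x => x)
  else Nat.iter (Z.to_nat (- k)) (fun f x => y_inv n i (f x)) (fun x => x).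

Definition prod_list (l : list (Z -> Z)) : Z -> Z :=
  fold_right (fun f g x => f (g x)) (fun x => x) l.

Definition y_mon (n : nat) (d : nat -> Z) : Z -> Z :=
  prod_list (map (fun i => y_pow n (Z.of_nat i) (d i)) (seq 1 n)).

Definition coxeter_elt (n : nat) : Z -> Z :=
  prod_list (map (fun i => s n (Z.of_nat i)) (seq 1 (n - 1))).

Definition expressible (n : nat) (v : Z -> Z) (r : nat) : Prop :=
  exists (k : Z) (w : list nat),
    length w = r /\ Forall (fun i => (i < n)%nat) w /\
    feq v (fun x => pi_pow k (prod_list (map (fun i => s n (Z.of_nat i)) w) x)).

(* l is the length of v: v = pi^k alpha with alpha in the Coxeter group, and l
   is the Coxeter length of alpha (minimal number of simple reflections). *)
Definition length_is (n : nat) (v : Z -> Z) (l : nat) : Prop :=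
  expressible n v l /\ forall r, expressible n v r -> (l <= r)%nat.

From Stdlib Require Import ZArith List Lia.
Open Scope Z_scope.

(* Write [r x] for the representative of [x] modulo [n] in [1..n] and
   [sigma r = d_1 + ... + d_r], so that [m = sigma n].  The element
   [v = y^d s_1 ... s_{n-1}] sends [x] to [x + 1 + n d_{r x + 1}] when [r x < n],
   and to [x + 1 - n + n d_1] when [r x = n].  The map
   [g x = x - r x + m r x - n sigma (r x)] commutes with translation by [n] and
   satisfies [g (v x) = g x + m]; when [gcd m n = 1], multiplication by [m]
   permutes the residues mod [n], so [g] is a bijection conjugating [v] to
   [pi^m].  Finally [pi^m] has length [0]. *)

(* The representative of [x] modulo [n] in [1..n] (not [0..n-1]), matching the
   indexing of [y_1, ..., y_n] and [s_1, ..., s_{n-1}]. *)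
Definition residue (n : nat) (x : Z) : Z := (x - 1) mod Z.of_nat n + 1.

Definition periodic (n : nat) (f : Z -> Z) : Prop :=
  forall x, f (x + Z.of_nat n) = f x + Z.of_nat n.

Definition partial_sum (d : nat -> Z) (r : Z) : Z :=
  fold_right Z.add 0 (map d (seq 1 (Z.to_nat r))).

Ltac destruct_ifs :=
  repeat match goal with |- context [if ?c then _ else _] => destruct c eqn:? end;
  rewrite ?Bool.andb_true_iff, ?Bool.andb_false_iff, ?Z.eqb_eq, ?Z.eqb_neq,
    ?Z.leb_le, ?Z.leb_gt, ?Z.ltb_lt, ?Z.ltb_ge in *.

Section Residue.
Variable n : nat.
Hypothesis n_pos : (1 <= n)%nat.
Local Notation N := (Z.of_nat n).

Lemma residue_bound x : 1 <= residue n x <= N.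
Proof. unfold residue; pose proof (Z.mod_pos_bound (x - 1) N); lia. Qed.

Lemma residue_decomp x : x = residue n x + N * ((x - 1) / N).
Proof. unfold residue; pose proof (Z.div_mod (x - 1) N); lia. Qed.

Lemma residue_addMn a k : residue n (a + N * k) = residue n a.
Proof.
  unfold residue; replace (a + N * k - 1) with ((a - 1) + k * N) by ring.
  now rewrite Z_mod_plus_full.
Qed.

Lemma residue_id r : 1 <= r <= N -> residue n r = r.
Proof. intros; unfold residue; rewrite Z.mod_small; lia. Qed.

Lemma residue_eq r a k : 1 <= r <= N -> a = r + N * k -> residue n a = r.
Proof. intros Hr ->; rewrite residue_addMn; now apply residue_id. Qed.

Lemma mod_residue x : x mod N = residue n x mod N.
Proof.
  rewrite (residue_decomp x) at 1; rewrite Z.mul_comm; apply Z_mod_plus_full.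
Qed.

Lemma residue_succ x :
  residue n (x + 1) = if residue n x =? N then 1 else residue n x + 1.
Proof.
  pose proof (residue_bound x); rewrite (residue_decomp x) at 1.
  destruct (Z.eqb_spec (residue n x) N) as [E|E].
  - apply (residue_eq _ _ ((x - 1) / N + 1)); lia.
  - apply (residue_eq _ _ ((x - 1) / N)); lia.
Qed.

Lemma eqb_mod_bounded a b :
  1 <= a <= N -> 1 <= b <= N -> (a mod N =? b mod N) = (a =? b).
Proof.
  intros Ha Hb; destruct (Z.eqb_spec a b) as [->|Hab]; [apply Z.eqb_refl|].
  apply Z.eqb_neq; intros E; apply Hab.
  rewrite <- (residue_id a Ha), <- (residue_id b Hb); unfold residue.
  now rewrite <- Zminus_mod_idemp_l, E, Zminus_mod_idemp_l.
Qed.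

End Residue.
Lemma periodic_addMn n f : periodic n f ->
  forall x k, f (x + Z.of_nat n * k) = f x + Z.of_nat n * k.
Proof.
  intros Hf.
  assert (Hnat : forall x p, f (x + Z.of_nat n * Z.of_nat p) = f x + Z.of_nat n * Z.of_nat p).
  { intros x p; induction p as [|p IH]; [now rewrite !Z.mul_0_r, !Z.add_0_r|].
    rewrite Nat2Z.inj_succ, Z.mul_succ_r, Z.add_assoc, Hf, IH; ring. }
  intros x k; destruct (Z_le_gt_dec 0 k).
  - rewrite <- (Z2Nat.id k) by lia; apply Hnat.
  - specialize (Hnat (x + Z.of_nat n * k) (Z.to_nat (- k))).
    rewrite Z2Nat.id in Hnat by lia.
    replace (x + Z.of_nat n * k + Z.of_nat n * - k) with x in Hnat by ring; lia.
Qed.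

Lemma periodic_prod_list n (l : list (Z -> Z)) :
  Forall (periodic n) l -> periodic n (prod_list l).
Proof. induction 1 as [|f l Hf _ IH]; intros x; simpl; [reflexivity|now rewrite IH]. Qed.

Lemma periodic_s n i : periodic n (s n i).
Proof.
  intros x; unfold s; cbv zeta.
  replace ((x + Z.of_nat n) mod Z.of_nat n) with (x mod Z.of_nat n)
    by (rewrite <- (Z_mod_plus_full x 1); f_equal; ring).
  destruct_ifs; lia.
Qed.

Lemma periodic_coxeter_elt n : periodic n (coxeter_elt n).
Proof.
  apply periodic_prod_list, Forall_forall; intros f Hf.
  apply in_map_iff in Hf as [i [<- _]]; apply periodic_s.
Qed.

Section Values.
Variable n : nat.
Hypothesis n_pos : (1 <= n)%nat.
Local Notation N := (Z.of_nat n).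

Lemma s_val i x : 2 <= N -> 1 <= i <= N - 1 -> 1 <= x <= N ->
  s n i x = if x =? i then x + 1 else if x =? i + 1 then x - 1 else x.
Proof.
  intros Hn2 Hi Hx; unfold s; cbv zeta.
  replace (2 <=? N) with true by (symmetry; apply Z.leb_le; lia).
  now rewrite !eqb_mod_bounded by lia.
Qed.

Lemma s_prod_cycle len a : (2 <= n)%nat -> (1 <= a)%nat -> (a + len <= n)%nat ->
  forall x, 1 <= x <= N ->
  prod_list (map (fun i => s n (Z.of_nat i)) (seq a len)) x =
  if ((Z.of_nat a <=? x) && (x <? Z.of_nat (a + len)))%bool then x + 1
  else if x =? Z.of_nat (a + len) then Z.of_nat a else x.
Proof.
  intros Hn2; revert a; induction len as [|len IH]; intros a Ha Hal x Hx.
  - simpl; rewrite Nat.add_0_r; destruct_ifs; lia.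
  - cbn [seq map prod_list fold_right].
    fold (prod_list (map (fun i => s n (Z.of_nat i)) (seq (S a) len))).
    rewrite IH by lia; destruct_ifs; rewrite s_val by lia; destruct_ifs; lia.
Qed.

Lemma coxeter_elt_val x :
  coxeter_elt n x = x + 1 - N * (if residue n x =? N then 1 else 0).
Proof.
  pose proof (residue_bound n n_pos x) as Hr.
  destruct (Nat.eq_dec n 1) as [->|Hn1].
  - unfold coxeter_elt; simpl in *; destruct_ifs; lia.
  - rewrite (residue_decomp n n_pos x) at 1.
    rewrite (periodic_addMn n _ (periodic_coxeter_elt n)).
    unfold coxeter_elt; rewrite s_prod_cycle by lia.
    replace (1 + (n - 1))%nat with n by lia.
    pose proof (residue_decomp n n_pos x); destruct_ifs; lia.
Qed.

Lemma y_iter_val i p z :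
  Nat.iter p (fun f x => y n i (f x)) (fun x => x) z =
  if z mod N =? i mod N then z + N * Z.of_nat p else z.
Proof.
  induction p as [|p IH]; simpl Nat.iter; [destruct_ifs; lia|].
  rewrite IH; unfold y; destruct (z mod N =? i mod N) eqn:E; [|now rewrite E].
  rewrite Z.mul_comm, Z_mod_plus_full, E; lia.
Qed.

Lemma y_inv_iter_val i p z :
  Nat.iter p (fun f x => y_inv n i (f x)) (fun x => x) z =
  if z mod N =? i mod N then z - N * Z.of_nat p else z.
Proof.
  induction p as [|p IH]; simpl Nat.iter; [destruct_ifs; lia|].
  rewrite IH; unfold y_inv; destruct (z mod N =? i mod N) eqn:E; [|now rewrite E].
  replace (z - N * Z.of_nat p) with (z + - Z.of_nat p * N) by ring.
  rewrite Z_mod_plus_full, E; lia.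
Qed.

Lemma y_pow_val i k z : y_pow n i k z = if z mod N =? i mod N then z + N * k else z.
Proof.
  unfold y_pow; destruct (0 <=? k) eqn:E.
  - rewrite y_iter_val, Z2Nat.id by lia; reflexivity.
  - rewrite y_inv_iter_val, Z2Nat.id by lia; destruct_ifs; lia.
Qed.

Lemma y_pow_prod_val d l z :
  prod_list (map (fun i => y_pow n (Z.of_nat i) (d i)) l) z =
  z + N * fold_right Z.add 0
            (map (fun i => if z mod N =? Z.of_nat i mod N then d i else 0) l).
Proof.
  induction l as [|i l IH]; [simpl; ring|].
  cbn [map prod_list fold_right].
  fold (prod_list (map (fun i => y_pow n (Z.of_nat i) (d i)) l)).
  rewrite IH, y_pow_val.
  set (T := fold_right _ _ _).
  replace (z + N * T) with (z + T * N) by ring.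
  rewrite Z_mod_plus_full; destruct_ifs; lia.
Qed.

Lemma sum_indicator_seq d r len a :
  1 <= r <= N -> (1 <= a)%nat -> (a + len <= n + 1)%nat ->
  fold_right Z.add 0
    (map (fun i => if r mod N =? Z.of_nat i mod N then d i else 0) (seq a len))
  = if ((Z.of_nat a <=? r) && (r <? Z.of_nat (a + len)))%bool then d (Z.to_nat r) else 0.
Proof.
  intros Hr; revert a; induction len as [|len IH]; intros a Ha Hal.
  - simpl; destruct_ifs; lia.
  - cbn [seq map fold_right]; rewrite IH, eqb_mod_bounded by lia.
    destruct (Z.eqb_spec r (Z.of_nat a)) as [->|]; [rewrite Nat2Z.id|]; destruct_ifs; lia.
Qed.

Lemma y_mon_val d z : y_mon n d z = z + N * d (Z.to_nat (residue n z)).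
Proof.
  unfold y_mon; rewrite y_pow_prod_val, (mod_residue n n_pos z).
  pose proof (residue_bound n n_pos z).
  rewrite sum_indicator_seq by lia; destruct_ifs; lia.
Qed.

End Values.

Lemma partial_sum_succ d r :
  0 <= r -> partial_sum d (r + 1) = partial_sum d r + d (Z.to_nat (r + 1)).
Proof.
  intros Hr; unfold partial_sum; rewrite Z2Nat.inj_add, Nat.add_1_r by lia.
  rewrite seq_S, map_app, fold_right_app; simpl.
  replace (S (Z.to_nat r)) with (Z.to_nat (r + 1)) by lia.
  generalize (map d (seq 1 (Z.to_nat r))); intros l; induction l; simpl; lia.
Qed.

Section Conjugator.
Variable n : nat.
Hypothesis n_pos : (1 <= n)%nat.
Variable d : nat -> Z.
Local Notation N := (Z.of_nat n).
Local Notation sigma := (partial_sum d).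
Local Notation m := (partial_sum d (Z.of_nat n)).

Definition conjugator (x : Z) : Z :=
  let r := residue n x in x - r + r * m - N * sigma r.

Lemma y_mon_coxeter_val x :
  y_mon n d (coxeter_elt n x) =
  if residue n x =? N then x + 1 - N + N * d 1%nat
  else x + 1 + N * d (Z.to_nat (residue n x + 1)).
Proof.
  rewrite coxeter_elt_val, y_mon_val by exact n_pos.
  replace (x + 1 - N * _) with (x + 1 + N * - (if residue n x =? N then 1 else 0)) by ring.
  rewrite residue_addMn, residue_succ by exact n_pos.
  destruct (residue n x =? N); [change (Z.to_nat 1) with 1%nat|]; ring.
Qed.

Lemma conjugator_intertwines x :
  conjugator (y_mon n d (coxeter_elt n x)) = conjugator x + m.
Proof.
  pose proof (residue_bound n n_pos x) as Hr.
  rewrite y_mon_coxeter_val; unfold conjugator.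
  pose proof (residue_decomp n n_pos x) as Dx.
  destruct (Z.eqb_spec (residue n x) N) as [E|E].
  - rewrite (residue_eq n n_pos 1 (x + 1 - N + N * d 1%nat) ((x - 1) / N + d 1%nat)) by lia.
    replace (sigma 1) with (d 1%nat) by (unfold partial_sum; simpl; ring); rewrite E; ring.
  - set (e := d (Z.to_nat (residue n x + 1))).
    rewrite (residue_eq n n_pos (residue n x + 1) (x + 1 + N * e) ((x - 1) / N + e)) by lia.
    rewrite partial_sum_succ by lia; fold e; ring.
Qed.

Lemma periodic_conjugator : periodic n conjugator.
Proof.
  intros x; unfold conjugator; cbv zeta.
  replace (x + N) with (x + N * 1) by ring; rewrite residue_addMn; ring.
Qed.

Section Inverse.
Variables u t : Z.
Hypothesis bezout : u * m + t * N = 1.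

(* [u] inverts [m] modulo [n], so [z |-> residue n (z * u)] recovers [r x] from
   [g x = m r x (mod n)]. *)
Definition conjugator_inv (z : Z) : Z :=
  let r := residue n (z * u) in z + r - r * m + N * sigma r.

Lemma conjugator_inv_conjugator x : conjugator_inv (conjugator x) = x.
Proof.
  unfold conjugator_inv, conjugator.
  pose proof (residue_bound n n_pos x) as Hr; pose proof (residue_decomp n n_pos x) as Dx.
  set (r := residue n x) in *; set (q := (x - 1) / N) in Dx.
  rewrite (residue_eq n n_pos r _ (q * u - r * t - sigma r * u)); [ring|exact Hr|].
  rewrite Dx at 1.
  transitivity (r * (u * m + t * N) + N * (q * u - r * t - sigma r * u)); [ring|].
  rewrite bezout; ring.
Qed.

Lemma conjugator_conjugator_inv z : conjugator (conjugator_inv z) = z.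
Proof.
  unfold conjugator_inv, conjugator.
  pose proof (residue_bound n n_pos (z * u)) as Hr.
  pose proof (residue_decomp n n_pos (z * u)) as Dz.
  set (r := residue n (z * u)) in *; set (q := (z * u - 1) / N) in Dz.
  assert (Ez : z + r - r * m + N * sigma r = r + N * (q * m + z * t + sigma r)).
  { transitivity (z * (u * m + t * N) + r - r * m + N * sigma r); [rewrite bezout; ring|].
    transitivity (z * u * m + z * t * N + r - r * m + N * sigma r); [ring|].
    rewrite Dz; ring. }
  rewrite (residue_eq n n_pos r _ _ Hr Ez); ring.
Qed.

End Inverse.

Lemma is_affperm_conjugator : Z.gcd m N = 1 -> is_affperm n conjugator.
Proof.
  intros Hgcd; destruct (Z.gcd_bezout _ _ _ Hgcd) as [u [t bezout]].
  split; [|exact periodic_conjugator].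
  exists (conjugator_inv u); split.
  - exact (conjugator_inv_conjugator u t bezout).
  - exact (conjugator_conjugator_inv u t bezout).
Qed.

End Conjugator.

Lemma length_is_pi_pow n k : length_is n (pi_pow k) 0.
Proof.
  split; [|intros; lia].
  exists k, nil; repeat split; constructor.
Qed.

Theorem corollary3p4 (n : nat) (d : nat -> Z) :
  (1 <= n)%nat ->
  let m := fold_right Z.add 0 (map d (seq 1 n)) in
  Z.gcd m (Z.of_nat n) = 1 ->
  aff_conj n (fun x => y_mon n d (coxeter_elt n x)) (pi_pow m) /\
  exists lp : nat, length_is n (pi_pow m) lp /\
    forall w : Z -> Z, aff_conj n w (pi_pow m) ->
      forall lw : nat, length_is n w lw -> (lp <= lw)%nat.
Proof.
  intros n_pos m Hgcd.
  assert (Hm : partial_sum d (Z.of_nat n) = m) by (unfold partial_sum; now rewrite Nat2Z.id).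
  split.
  - exists (conjugator n d); split.
    + apply is_affperm_conjugator; [exact n_pos|now rewrite Hm].
    + intros x; unfold pi_pow; rewrite <- Hm; exact (conjugator_intertwines n n_pos d x).
  - exists 0%nat; split; [apply length_is_pi_pow|intros; lia].
Qed.
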